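(* Let $q$, $\phi,\theta$, $U_1$ and $a^*,b^*,c^*$ be as in the context. (i) For fixed $c>0$ let $\gamma(x)=\int_c^xdt/R_1(t,\lambda)$ and $U_2=(P_1\cos2\gamma+(Q_1/R_1)\sin2\gamma-(2/R_1)\cos2\gamma,\ Q_1\cos2\gamma+2\sin2\gamma,\ R_1\cos2\gamma)^T$, $U_3=(P_1\sin2\gamma-(Q_1/R_1)\cos2\gamma-(2/R_1)\sin2\gamma,\ Q_1\sin2\gamma-2\cos2\gamma,\ R_1\sin2\gamma)^T$; for any constants $\beta_2,\beta_3$, if $R$ is the third component of $\beta_2U_2+\beta_3U_3$, then for every $x_0>0$, $\lim_{N\to\infty}\int_{x_0}^NR\,dx\big/\int_{x_0}^NR_1\,dx=0$. (ii) $a^*(\lambda)>0$ and $c^*(\lambda)>0$ for all $\lambda\in(0,\infty)$.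
   Context: $-y''+qy=\lambda y$ on $(0,\infty)$, $\lambda>0$, $q(x)=\frac{q_0}{x^2}+\frac{q_1}{x}+\sum_{n\ge0}q_{n+2}x^n$ with real coefficients, series convergent on $(0,\infty)$, $q_0\ge-\tfrac14$, $q_0,q_1$ not both zero, $q\to0$ at $\infty$, and for some $x_0>0$ either $q\in L_1(x_0,\infty)$ or ($q'\in L_1(x_0,\infty)$, $q\in AC_{loc}[x_0,\infty)$). $\phi,\theta$: with $q_0=\nu^2-\frac14$, $\nu\ge0$, $\phi=x^{1/2+\nu}(1+\sum_{n\ge1}a_n(\lambda)x^n)$ is the Frobenius solution at $0$ for the larger indicial root, $y_2$ a second (possibly logarithmic) Frobenius solution with leading coefficient $1$ and coefficients real polynomials in $\lambda$, $C=W(\phi,y_2)\ne0$ real, $\theta=y_2/C$ so $W(\phi,\theta)=1$. Appell system: $(P,Q,R)'=M(P,Q,R)^T$, $M=\begin{pmatrix}0&\lambda-q&0\\-2&0&2(\lambda-q)\\0&-1&0\end{pmatrix}$; $U_1=(P_1,Q_1,R_1)^T$ is its unique solution with $\lim_{x\to\infty}U_1=(\sqrt\lambda,0,1/\sqrt\lambda)^T$ (and $R_1>0$ on $(0,\infty)$). $a^*,b^*,c^*$ are the real coefficients with $U_1=a^*((\theta')^2,-2\theta\theta',\theta^2)^T+b^*(\theta'\phi',-(\theta\phi'+\theta'\phi),\theta\phi)^T+c^*((\phi')^2,-2\phi\phi',\phi^2)^T$. *)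

From Stdlib Require Import Reals.
From Coquelicot Require Import Coquelicot.
Open Scope R_scope.

(* q(x) = q0/x^2 + q1/x + sum_{n>=0} q_{n+2} x^n ; qs n stands for q_{n+2}. *)
Definition qfun (q0 q1 : R) (qs : nat -> R) (x : R) : R :=
  q0 / x ^ 2 + q1 / x + PSeries qs x.

(* nu >= 0 with q0 = nu^2 - 1/4 *)
Definition nu_of (q0 : R) : R := sqrt (q0 + / 4).

Definition solves_SL (q : R -> R) (lam : R) (y : R -> R) : Prop :=
  forall x, 0 < x ->
    ex_derive y x /\ ex_derive (Derive y) x /\
    - Derive (Derive y) x + q x * y x = lam * y x.

Definition Wr (f g : R -> R) (x : R) : R := f x * Derive g x - Derive f x * g x.

Definition frobenius_phi (q : R -> R) (lam nu : R) (phi : R -> R) : Prop :=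
  solves_SL q lam phi /\
  exists a : nat -> R, a 0%nat = 1 /\ (forall x, 0 < x -> ex_pseries a x) /\
    forall x, 0 < x -> phi x = Rpower x (/ 2 + nu) * PSeries a x.

Definition frobenius_second (q : R -> R) (lam nu : R) (phi y2 : R -> R) : Prop :=
  solves_SL q lam y2 /\
  exists (kappa : R) (b : nat -> R),
    (forall x, 0 < x -> ex_pseries b x) /\
    (0 < nu -> b 0%nat = 1) /\ (nu = 0 -> kappa = 1) /\
    forall x, 0 < x -> y2 x = kappa * ln x * phi x + Rpower x (/ 2 - nu) * PSeries b x.

(* q in L1(x0,oo) or q' in L1(x0,oo) (q is real-analytic on (0,oo), so AC_loc) *)
Definition q_integrability (q : R -> R) : Prop :=
  exists x0, 0 < x0 /\
    (ex_RInt_gen (fun x => Rabs (q x)) (at_point x0) (Rbar_locally p_infty) \/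
     ex_RInt_gen (fun x => Rabs (Derive q x)) (at_point x0) (Rbar_locally p_infty)).

Definition appell_sol (q : R -> R) (lam : R) (P Q Rr : R -> R) : Prop :=
  forall x, 0 < x ->
    is_derive P x ((lam - q x) * Q x) /\
    is_derive Q x (-2 * P x + 2 * (lam - q x) * Rr x) /\
    is_derive Rr x (- Q x).

Definition appell_rep (P Q Rr th ph : R -> R) (a b c : R) : Prop :=
  forall x, 0 < x ->
    P x = a * (Derive th x) ^ 2 + b * (Derive th x * Derive ph x) + c * (Derive ph x) ^ 2 /\
    Q x = a * (-2 * th x * Derive th x) + b * (- (th x * Derive ph x + Derive th x * ph x))
          + c * (-2 * ph x * Derive ph x) /\
    Rr x = a * (th x) ^ 2 + b * (th x * ph x) + c * (ph x) ^ 2.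

Definition triple := (R * R * R)%type.

Definition gamma_fn (R1 : R -> R) (c x : R) : R := RInt (fun t => / R1 t) c x.

Definition U2 (P1 Q1 R1 : R -> R) (c x : R) : triple :=
  let g := gamma_fn R1 c x in
  (P1 x * cos (2 * g) + Q1 x / R1 x * sin (2 * g) - 2 / R1 x * cos (2 * g),
   Q1 x * cos (2 * g) + 2 * sin (2 * g),
   R1 x * cos (2 * g)).

Definition U3 (P1 Q1 R1 : R -> R) (c x : R) : triple :=
  let g := gamma_fn R1 c x in
  (P1 x * sin (2 * g) - Q1 x / R1 x * cos (2 * g) - 2 / R1 x * sin (2 * g),
   Q1 x * sin (2 * g) - 2 * cos (2 * g),
   R1 x * sin (2 * g)).

Definition lincomb3 (b2 : R) (u : triple) (b3 : R) (v : triple) : triple :=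
  (b2 * fst (fst u) + b3 * fst (fst v),
   b2 * snd (fst u) + b3 * snd (fst v),
   b2 * snd u + b3 * snd v).

Definition third (u : triple) : R := snd u.

(** (i) The third component of [beta2 U2 + beta3 U3] is [R1 (beta2 cos 2γ + beta3 sin 2γ)].
    Since [γ' = 1/R1] and [R1' = -Q1], it is the derivative of [R1^2 (beta2 sin 2γ - beta3 cos 2γ)/2]
    up to [R1 Q1 (beta2 sin 2γ - beta3 cos 2γ)], which tends to 0.  So its integral over
    [[x0, N]] is [o(N)], whereas that of [R1] is [N/√λ + o(N)].

    (ii) Substituting the representation of [U1] and using [W(φ, θ) = 1] gives
    [P1 R1 - Q1^2/4 = a c - b^2/4]; letting [x -> ∞] shows this constant is 1.  Completing the
    square, [4 a R1 = (2 a θ + b φ)^2 + 4 φ^2 > 0], and [R1 > 0] near infinity forces [a > 0],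
    hence [c > 0] (and [R1 > 0] everywhere, so that γ is well defined). *)

From Stdlib Require Import Reals Lra Psatz.
From Coquelicot Require Import Coquelicot.
Open Scope R_scope.

Lemma ex_RInt_continuous_ge (f : R -> R) (x0 a b : R) :
  (forall x, x0 <= x -> continuous f x) -> x0 <= a -> x0 <= b -> ex_RInt f a b.
Proof.
  intros Hc Ha Hb. apply (ex_RInt_continuous (V := R_CompleteNormedModule)).
  intros z [Hz _]. apply Hc, Rle_trans with (2 := Hz), Rmin_glb; assumption.
Qed.

Lemma is_lim_Rinv_p_infty : is_lim (fun N => / N) p_infty 0.
Proof. exact (is_lim_inv (fun N => N) p_infty p_infty (is_lim_id _) ltac:(discriminate)). Qed.

Lemma is_lim_mult_bounded_0 (u v : R -> R) (K : R) :
  is_lim u p_infty 0 -> (forall x, Rabs (v x) <= K) ->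
  is_lim (fun x => u x * v x) p_infty 0.
Proof.
  intros Hu Hv. apply is_lim_spec in Hu. apply is_lim_spec. intros eps.
  assert (HK : 0 <= K) by (eapply Rle_trans; [apply Rabs_pos | apply (Hv 0)]).
  assert (He : 0 < eps / (K + 1)) by (apply Rdiv_lt_0_compat; [apply cond_pos | lra]).
  destruct (Hu (mkposreal _ He)) as [M HM]. exists M. intros x Hx.
  specialize (HM x Hx). simpl in HM. rewrite Rminus_0_r in *. rewrite Rabs_mult.
  apply Rmult_lt_compat_r with (r := K + 1) in HM; [| lra].
  unfold Rdiv in HM. rewrite Rmult_assoc, Rinv_l, Rmult_1_r in HM by lra.
  generalize (Hv x) (Rabs_pos (u x)) (Rabs_pos (v x)). nra.
Qed.

Lemma is_lim_RInt_mean_0 (f : R -> R) (x0 : R) :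
  (forall x, x0 <= x -> continuous f x) -> is_lim f p_infty 0 ->
  is_lim (fun N => RInt f x0 N / N) p_infty 0.
Proof.
  intros Hc Hf. apply is_lim_spec in Hf. apply is_lim_spec. intros [eps Heps]; simpl.
  assert (He2 : 0 < eps / 2) by lra.
  destruct (Hf (mkposreal _ He2)) as [M HM]; simpl in HM.
  set (M' := Rmax M (Rmax x0 0) + 1).
  assert (HM' : M < M' /\ x0 < M' /\ 0 < M').
  { unfold M'. generalize (Rmax_l M (Rmax x0 0)) (Rmax_r M (Rmax x0 0)) (Rmax_l x0 0) (Rmax_r x0 0).
    lra. }
  set (A := Rabs (RInt f x0 M')).
  exists (Rmax M' (2 * (A + 1) / eps)). intros N HN.
  generalize (Rmax_l M' (2 * (A + 1) / eps)) (Rmax_r M' (2 * (A + 1) / eps)); intros HN1 HN2.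
  assert (HAN : 2 * (A + 1) < N * eps).
  { replace (2 * (A + 1)) with (2 * (A + 1) / eps * eps) by (field; lra).
    apply Rmult_lt_compat_r; lra. }
  assert (HNpos : 0 < N) by (generalize (Rabs_pos (RInt f x0 M')); fold A; nra).
  assert (Hexl : ex_RInt f x0 M') by (apply (ex_RInt_continuous_ge f x0); auto; lra).
  assert (Hexr : ex_RInt f M' N) by (apply (ex_RInt_continuous_ge f x0); auto; lra).
  assert (Htail : Rabs (RInt f M' N) <= (N - M') * (eps / 2)).
  { apply abs_RInt_le_const; [lra | exact Hexr |].
    intros t Ht. specialize (HM t ltac:(lra)). rewrite Rminus_0_r in HM. lra. }
  rewrite <- (RInt_Chasles f x0 M' N Hexl Hexr).
  change (plus (RInt f x0 M') (RInt f M' N)) with (RInt f x0 M' + RInt f M' N).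
  rewrite Rminus_0_r. unfold Rdiv. rewrite Rabs_mult, Rabs_inv, (Rabs_pos_eq N) by lra.
  apply Rmult_lt_reg_r with N; [lra |]. rewrite Rmult_assoc, Rinv_l, Rmult_1_r by lra.
  generalize (Rabs_triang (RInt f x0 M') (RInt f M' N)) (Rabs_pos (RInt f x0 M')).
  fold A. nra.
Qed.

Lemma is_lim_RInt_mean (f : R -> R) (x0 l : R) :
  (forall x, x0 <= x -> continuous f x) -> is_lim f p_infty l ->
  is_lim (fun N => RInt f x0 N / N) p_infty l.
Proof.
  intros Hc Hf.
  assert (Hc' : forall x, x0 <= x -> continuous (fun t => f t - l) x).
  { intros x Hx. apply (continuous_minus f (fun _ => l)); [auto | apply continuous_const]. }
  apply is_lim_ext_loc with (fun N => RInt (fun t => f t - l) x0 N / N + (l - l * x0 * / N)).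
  { exists (Rmax x0 0). intros N HN.
    pose proof (Rmax_l x0 0) as Hx0N; pose proof (Rmax_r x0 0) as H0N.
    assert (Hshift : RInt f x0 N = RInt (fun t => f t - l) x0 N + (N - x0) * l).
    { assert (Hex := ex_RInt_continuous_ge _ x0 x0 N Hc' (Rle_refl _) ltac:(lra)).
      apply is_RInt_unique. eapply is_RInt_ext;
        [| exact (is_RInt_plus _ _ _ _ _ _ (RInt_correct _ _ _ Hex) (is_RInt_const x0 N l))].
      intros x _. change (f x - l + l = f x). ring. }
    rewrite Hshift. field. lra. }
  replace (Finite l) with (Finite (0 + (l - l * x0 * 0))) by (f_equal; ring).
  apply is_lim_plus'.
  - apply is_lim_RInt_mean_0; [exact Hc' |].
    replace 0 with (l - l) by ring. apply is_lim_minus'; [exact Hf | apply is_lim_const].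
  - apply is_lim_minus'; [apply is_lim_const |].
    apply (is_lim_scal_l (fun N => / N) (l * x0) p_infty 0), is_lim_Rinv_p_infty.
Qed.

Lemma is_derive_RInt_pos (f : R -> R) (c x : R) :
  0 < c -> 0 < x -> (forall t, 0 < t -> continuous f t) ->
  is_derive (fun y => RInt f c y) x (f x).
Proof.
  intros Hc Hx Hf. apply (is_derive_RInt f (fun y => RInt f c y) c x); [| exact (Hf x Hx)].
  assert (Hx2 : 0 < x / 2) by lra. exists (mkposreal _ Hx2). intros y Hy.
  change (Rabs (y - x) < x / 2) in Hy. apply Rabs_def2 in Hy.
  apply (RInt_correct (V := R_CompleteNormedModule)), (ex_RInt_continuous_ge f (Rmin c (x / 2)));
    [intros t Ht; apply Hf, Rlt_le_trans with (2 := Ht), Rmin_glb_lt | apply Rmin_l |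
     apply Rle_trans with (x / 2); [apply Rmin_r |]]; lra.
Qed.

Lemma Rabs_sin_cos_comb_le (b2 b3 y : R) :
  Rabs (b2 * sin y - b3 * cos y) <= Rabs b2 + Rabs b3.
Proof.
  unfold Rminus. eapply Rle_trans; [apply Rabs_triang |].
  rewrite Rabs_Ropp, !Rabs_mult.
  assert (Hs : Rabs (sin y) <= 1) by (apply Rabs_le, SIN_bound).
  assert (Hc : Rabs (cos y) <= 1) by (apply Rabs_le, COS_bound).
  generalize (Rabs_pos b2) (Rabs_pos b3) (Rabs_pos (sin y)) (Rabs_pos (cos y)). nra.
Qed.

Section OscillatoryMean.

Variables (R1 Q1 g : R -> R) (l b2 b3 : R).
Hypothesis Hl : 0 < l.
Hypothesis HR1pos : forall x, 0 < x -> 0 < R1 x.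
Hypothesis HR1' : forall x, 0 < x -> is_derive R1 x (- Q1 x).
Hypothesis HQ1c : forall x, 0 < x -> continuous Q1 x.
Hypothesis Hg' : forall x, 0 < x -> is_derive g x (/ R1 x).
Hypothesis HR1 : is_lim R1 p_infty l.
Hypothesis HQ1 : is_lim Q1 p_infty 0.

Let osc (x : R) : R := b2 * sin (2 * g x) - b3 * cos (2 * g x).

Lemma continuous_R1 x : 0 < x -> continuous R1 x.
Proof.
  intros Hx. apply (ex_derive_continuous (V := R_NormedModule)). eexists. exact (HR1' x Hx).
Qed.

Lemma continuous_osc x : 0 < x -> continuous osc x.
Proof.
  intros Hx. assert (Eg : ex_derive g x) by (exists (/ R1 x); exact (Hg' x Hx)).
  apply (ex_derive_continuous (V := R_NormedModule)). unfold osc.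
  auto_derive. repeat split; exact Eg.
Qed.

Lemma continuous_R1_Q1_osc x : 0 < x -> continuous (fun t => R1 t * Q1 t * osc t) x.
Proof.
  intros Hx. apply (continuous_mult (fun t => R1 t * Q1 t) osc), continuous_osc; [| exact Hx].
  apply (continuous_mult R1 Q1); [apply continuous_R1 | apply HQ1c]; exact Hx.
Qed.

Lemma continuous_oscillation x :
  0 < x -> continuous (fun t => b2 * (R1 t * cos (2 * g t)) + b3 * (R1 t * sin (2 * g t))) x.
Proof.
  intros Hx. assert (Eg : ex_derive g x) by (exists (/ R1 x); exact (Hg' x Hx)).
  assert (ER : ex_derive R1 x) by (exists (- Q1 x); exact (HR1' x Hx)).
  apply (ex_derive_continuous (V := R_NormedModule)). auto_derive. repeat split; assumption.
Qed.

Lemma is_derive_R1_sq_osc x : 0 < x ->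
  is_derive (fun t => R1 t ^ 2 * osc t / 2) x
    (b2 * (R1 x * cos (2 * g x)) + b3 * (R1 x * sin (2 * g x)) - R1 x * Q1 x * osc x).
Proof.
  intros Hx. assert (Eg : ex_derive g x) by (exists (/ R1 x); exact (Hg' x Hx)).
  assert (ER : ex_derive R1 x) by (exists (- Q1 x); exact (HR1' x Hx)).
  unfold osc. auto_derive; [repeat split; assumption |].
  change (Derive (fun t => R1 t) x) with (Derive R1 x).
  change (Derive (fun t => g t) x) with (Derive g x).
  rewrite (is_derive_unique _ _ _ (HR1' x Hx)), (is_derive_unique _ _ _ (Hg' x Hx)).
  field. apply Rgt_not_eq, HR1pos, Hx.
Qed.

Lemma RInt_oscillation_by_parts x0 N : 0 < x0 -> x0 <= N ->
  RInt (fun x => b2 * (R1 x * cos (2 * g x)) + b3 * (R1 x * sin (2 * g x))) x0 N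
  = R1 N ^ 2 * osc N / 2 - R1 x0 ^ 2 * osc x0 / 2 + RInt (fun x => R1 x * Q1 x * osc x) x0 N.
Proof.
  intros Hx0 HN.
  assert (Hpos : forall x, Rmin x0 N <= x <= Rmax x0 N -> 0 < x)
    by (intros x Hx; rewrite Rmin_left in Hx; lra).
  assert (Hprim := is_RInt_derive _ _ x0 N
    (fun x Hx => is_derive_R1_sq_osc x (Hpos x Hx))
    (fun x Hx => continuous_minus _ _ x (continuous_oscillation x (Hpos x Hx))
                   (continuous_R1_Q1_osc x (Hpos x Hx)))).
  assert (Hrest := RInt_correct _ _ _ (ex_RInt_continuous_ge _ x0 x0 N
    (fun x Hx => continuous_R1_Q1_osc x ltac:(lra)) (Rle_refl _) HN)).
  apply is_RInt_unique. eapply is_RInt_ext; [| exact (is_RInt_plus _ _ _ _ _ _ Hprim Hrest)].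
  intros x _. simpl. change (plus ?a ?b) with (a + b : R). ring.
Qed.

Lemma Rabs_osc_le x : Rabs (osc x) <= Rabs b2 + Rabs b3.
Proof. apply Rabs_sin_cos_comb_le. Qed.

Lemma is_lim_RInt_oscillation_mean x0 : 0 < x0 ->
  is_lim (fun N => RInt (fun x => b2 * (R1 x * cos (2 * g x)) + b3 * (R1 x * sin (2 * g x))) x0 N / N)
    p_infty 0.
Proof.
  intros Hx0.
  apply is_lim_ext_loc with (fun N => R1 N * R1 N * / N * (osc N / 2) - R1 x0 ^ 2 * osc x0 / 2 * / N
                                      + RInt (fun x => R1 x * Q1 x * osc x) x0 N / N).
  { exists x0. intros N HN. rewrite RInt_oscillation_by_parts by lra. field. lra. }
  replace (Finite 0) with (Finite (0 - 0 + 0)) by (f_equal; ring).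
  apply is_lim_plus'; [apply is_lim_minus' |].
  - apply is_lim_mult_bounded_0 with ((Rabs b2 + Rabs b3) / 2).
    + replace (Finite 0) with (Rbar_mult (Rbar_mult l l) 0) by (simpl; f_equal; ring).
      apply is_lim_mult; [apply is_lim_mult | apply is_lim_Rinv_p_infty | ]; simpl; auto.
    + intros N. unfold Rdiv. rewrite Rabs_mult, (Rabs_pos_eq (/ 2)) by lra.
      generalize (Rabs_osc_le N). lra.
  - replace (Finite 0) with (Rbar_mult (R1 x0 ^ 2 * osc x0 / 2) 0) by (simpl; f_equal; ring).
    apply is_lim_scal_l, is_lim_Rinv_p_infty.
  - apply is_lim_RInt_mean; [intros x Hx; apply continuous_R1_Q1_osc; lra |].
    apply is_lim_mult_bounded_0 with (Rabs b2 + Rabs b3); [| exact Rabs_osc_le].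
    replace (Finite 0) with (Rbar_mult l 0) by (simpl; f_equal; ring).
    apply is_lim_mult; simpl; auto.
Qed.

Lemma is_lim_RInt_oscillation_ratio x0 : 0 < x0 ->
  is_lim (fun N => RInt (fun x => b2 * (R1 x * cos (2 * g x)) + b3 * (R1 x * sin (2 * g x))) x0 N
                   / RInt R1 x0 N) p_infty 0.
Proof.
  intros Hx0.
  assert (Hmean : is_lim (fun N => RInt R1 x0 N / N) p_infty l)
    by (apply is_lim_RInt_mean; [intros x Hx; apply continuous_R1; lra | exact HR1]).
  apply is_lim_ext_loc with (fun N =>
    RInt (fun x => b2 * (R1 x * cos (2 * g x)) + b3 * (R1 x * sin (2 * g x))) x0 N / N
    / (RInt R1 x0 N / N)).
  { exists 0. intros N HN. unfold Rdiv. rewrite Rinv_mult, Rinv_inv.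
    rewrite (Rmult_comm (/ _) N), <- Rmult_assoc, (Rmult_assoc _ (/ N) N), Rinv_l, Rmult_1_r by lra.
    reflexivity. }
  replace (Finite 0) with (Rbar_div 0 l) by (simpl; f_equal; field; lra).
  apply is_lim_div; [apply is_lim_RInt_oscillation_mean; exact Hx0 | exact Hmean | | exact I].
  intro E. injection E. lra.
Qed.

End OscillatoryMean.

Section AppellRepresentation.

Variables (P Q Rr th ph : R -> R) (a b c : R).
Hypothesis Hrep : appell_rep P Q Rr th ph a b c.

Lemma appell_rep_third_square x : 0 < x ->
  4 * a * Rr x = (2 * a * th x + b * ph x) ^ 2 + (4 * a * c - b ^ 2) * ph x ^ 2.
Proof. intros Hx. destruct (Hrep x Hx) as [_ [_ ->]]. ring. Qed.

Hypothesis HW : forall x, 0 < x -> Wr ph th x = 1.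

Lemma appell_rep_invariant x : 0 < x -> P x * Rr x - Q x ^ 2 / 4 = a * c - b ^ 2 / 4.
Proof.
  intros Hx. destruct (Hrep x Hx) as [-> [-> ->]]. specialize (HW x Hx). unfold Wr in HW.
  transitivity ((a * c - b ^ 2 / 4) * (ph x * Derive th x - Derive ph x * th x) ^ 2);
    [field | rewrite HW; ring].
Qed.

Variable lam : R.
Hypothesis Hlam : 0 < lam.
Hypothesis HP : is_lim P p_infty (sqrt lam).
Hypothesis HQ : is_lim Q p_infty 0.
Hypothesis HR : is_lim Rr p_infty (/ sqrt lam).

Lemma appell_rep_det : a * c - b ^ 2 / 4 = 1.
Proof.
  assert (Hs : 0 < sqrt lam) by (apply sqrt_lt_R0; lra).
  assert (Hlim : is_lim (fun x => P x * Rr x - Q x ^ 2 / 4) p_infty 1).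
  { replace 1 with (sqrt lam * / sqrt lam - 0 ^ 2 / 4) by (field; lra).
    apply is_lim_minus'; [apply (is_lim_mult _ _ _ _ _ HP HR I) |].
    apply (is_lim_ext (fun x => Q x * (Q x * 1) * / 4)); [intros x; simpl; field |].
    apply (is_lim_scal_r _ _ _ _ (is_lim_mult _ _ _ _ _ HQ (is_lim_scal_r _ _ _ _ HQ) I)). }
  apply is_lim_ext_loc with (g := fun _ => a * c - b ^ 2 / 4) in Hlim;
    [| exists 0; intros x Hx; apply appell_rep_invariant; lra].
  apply is_lim_unique in Hlim. rewrite Lim_const in Hlim. injection Hlim. auto.
Qed.

Lemma appell_rep_pos : 0 < a /\ 0 < c /\ forall x, 0 < x -> 0 < Rr x.
Proof.
  assert (HD := appell_rep_det).
  assert (Hsq : forall x, 0 < x -> 4 * a * Rr x = (2 * a * th x + b * ph x) ^ 2 + 4 * ph x ^ 2).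
  { intros x Hx. rewrite appell_rep_third_square by exact Hx.
    replace (4 * a * c - b ^ 2) with 4 by lra. reflexivity. }
  (* [W(ph, th) = 1] forbids a common zero of [ph] and [th], and [a <> 0] since [a c = 1 + b^2/4]. *)
  assert (Hsq_pos : forall x, 0 < x -> 0 < (2 * a * th x + b * ph x) ^ 2 + 4 * ph x ^ 2).
  { intros x Hx. specialize (HW x Hx). unfold Wr in HW.
    destruct (Req_dec (ph x) 0) as [E | E].
    - rewrite E in *.
      assert (Hth : th x <> 0) by (intros E'; rewrite E' in HW; lra).
      assert (Ha : a <> 0) by (intros E'; rewrite E' in HD; nra).
      assert (0 < (2 * a * th x + b * 0) ^ 2) by (apply pow2_gt_0; intros E'; apply Hth; nra).
      lra.
    - generalize (pow2_gt_0 _ E) (pow2_ge_0 (2 * a * th x + b * ph x)). lra. }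
  assert (Hs : 0 < / sqrt lam) by (apply Rinv_0_lt_compat, sqrt_lt_R0; lra).
  apply is_lim_spec in HR. destruct (HR (mkposreal _ Hs)) as [M HM]; simpl in HM.
  set (x1 := Rmax M 0 + 1).
  assert (Hx1 : M < x1 /\ 0 < x1) by (unfold x1; generalize (Rmax_l M 0) (Rmax_r M 0); lra).
  assert (HRx1 : 0 < Rr x1) by (specialize (HM x1 (proj1 Hx1)); apply Rabs_def2 in HM; lra).
  assert (Ha : 0 < a) by (generalize (Hsq x1 (proj2 Hx1)) (Hsq_pos x1 (proj2 Hx1)); nra).
  split; [exact Ha | split; [nra |]].
  intros x Hx. generalize (Hsq x Hx) (Hsq_pos x Hx). nra.
Qed.

End AppellRepresentation.

Lemma Wr_div_r (f g : R -> R) (C x : R) : Wr f (fun t => g t / C) x = Wr f g x / C.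
Proof. unfold Wr, Rdiv. rewrite Derive_scal_l. ring. Qed.

Theorem mainTheorem9
  (q0 q1 : R) (qs : nat -> R)
  (Hconv : forall x, 0 < x -> ex_pseries qs x)
  (Hq0 : - / 4 <= q0) (Hq01 : q0 <> 0 \/ q1 <> 0)
  (Hqlim : is_lim (qfun q0 q1 qs) p_infty 0)
  (Hqint : q_integrability (qfun q0 q1 qs))
  (lam : R) (Hlam : 0 < lam)
  (phi y2 : R -> R)
  (Hphi : frobenius_phi (qfun q0 q1 qs) lam (nu_of q0) phi)
  (Hy2 : frobenius_second (qfun q0 q1 qs) lam (nu_of q0) phi y2)
  (C : R) (HC : C <> 0) (HW : forall x, 0 < x -> Wr phi y2 x = C)
  (P1 Q1 R1 : R -> R)
  (HU1 : appell_sol (qfun q0 q1 qs) lam P1 Q1 R1)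
  (HP1 : is_lim P1 p_infty (sqrt lam))
  (HQ1 : is_lim Q1 p_infty 0)
  (HR1 : is_lim R1 p_infty (/ sqrt lam))
  (astar bstar cstar : R)
  (Hrep : appell_rep P1 Q1 R1 (fun t => y2 t / C) phi astar bstar cstar) :
  (forall c : R, 0 < c -> forall beta2 beta3 : R, forall x0 : R, 0 < x0 ->
     is_lim (fun N =>
               RInt (fun x => third (lincomb3 beta2 (U2 P1 Q1 R1 c x) beta3 (U3 P1 Q1 R1 c x))) x0 N
               / RInt R1 x0 N)
            p_infty 0)
  /\ 0 < astar /\ 0 < cstar.
Proof.
  assert (HWtheta : forall x, 0 < x -> Wr phi (fun t => y2 t / C) x = 1).
  { intros x Hx. rewrite Wr_div_r, HW by exact Hx. field. exact HC. }
  destruct (appell_rep_pos _ _ _ _ _ _ _ _ Hrep HWtheta lam Hlam HP1 HQ1 HR1)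
    as [Ha [Hc HR1pos]].
  split; [| split; assumption].
  intros c Hc0 beta2 beta3 x0 Hx0.
  assert (HR1' : forall x, 0 < x -> is_derive R1 x (- Q1 x)) by apply HU1.
  assert (HQ1c : forall x, 0 < x -> continuous Q1 x).
  { intros x Hx. apply (ex_derive_continuous (V := R_NormedModule)).
    eexists. apply (HU1 x Hx). }
  assert (Hgamma : forall x, 0 < x -> is_derive (gamma_fn R1 c) x (/ R1 x)).
  { intros x Hx. apply (is_derive_RInt_pos (fun t => / R1 t) c x Hc0 Hx).
    intros t Ht. apply (ex_derive_continuous (V := R_NormedModule)). auto_derive.
    split; [exists (- Q1 t); apply HR1', Ht | split; [apply Rgt_not_eq, HR1pos, Ht | exact I]]. }
  exact (is_lim_RInt_oscillation_ratio R1 Q1 (gamma_fn R1 c) (/ sqrt lam) beta2 beta3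
    (Rinv_0_lt_compat _ (sqrt_lt_R0 _ Hlam)) HR1pos HR1' HQ1c Hgamma HR1 HQ1 x0 Hx0).
Qed.
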